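(* Let $m\ge1$, real $p,q$ with $p\wedge q>m-1$, $r=p-m$, $s=q-m$, and let $x_1(t),\dots,x_m(t)$ be the roots of the averaged characteristic polynomial $\chi_t^{(r,s,m)}$ of the Jacobi eigenvalue process (started at a deterministic point of $[0,1]^m$). Let $m_\ell(t)=\frac1m\sum_{i=1}^mx_i(t)^\ell$, $\ell\ge0$ (so $m_0=1$). Then for $t>0$ $$\frac{d}{dt}m_1(t)=p-(p+q)m_1(t),$$ and for every $\ell\ge2$, $$\frac{d}{dt}m_\ell(t)=-\ell(p+q-\ell+1)m_\ell(t)+\ell(p-\ell+1)m_{\ell-1}(t)+m\ell\sum_{k=0}^{\ell-2}\big(m_k(t)-m_{k+1}(t)\big)m_{\ell-1-k}(t).$$
   Context: The Jacobi eigenvalue process solves $d\lambda_t^i=\sqrt{2\lambda_t^i(1-\lambda_t^i)}dB_t^i+[p-(p+q)\lambda_t^i+\sum_{j\ne i}\frac{\lambda_t^i(1-\lambda_t^j)+\lambda_t^j(1-\lambda_t^i)}{\lambda_t^i-\lambda_t^j}]dt$ with independent Brownian motions; $\chi_t^{(r,s,m)}(x)=\mathbb E\prod_i(x-\lambda_t^i)$. Its roots are real, lie in $(0,1)$ for $t>0$, and (suitably indexed) satisfy $\dot x_j=p-(p+q)x_j+\sum_{k\ne j}\frac{x_j(1-x_k)+x_k(1-x_j)}{x_j-x_k}$. *)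

From HB Require Import structures.
From mathcomp Require Import all_boot all_order all_algebra.
From mathcomp Require Import all_classical all_reals all_analysis.
Set Implicit Arguments. Unset Strict Implicit. Unset Printing Implicit Defensive.
Import Order.TTheory GRing.Theory Num.Theory.
Local Open Scope ring_scope.

(* Drift of the root ODE for the averaged characteristic polynomial of the
   Jacobi eigenvalue process:
   p - (p+q) x_j + sum_{k<>j} (x_j(1-x_k) + x_k(1-x_j)) / (x_j - x_k). *)
Definition jacobi_root_drift (R : realType) (m : nat) (p q : R)
  (y : 'I_m -> R) (j : 'I_m) : R :=
  p - (p + q) * y j
  + \sum_(k < m | k != j) (y j * (1 - y k) + y k * (1 - y j)) / (y j - y k).

Definition root_moment (R : realType) (m : nat) (x : 'I_m -> R -> R)
  (l : nat) (t : R) : R :=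
  (m%:R)^-1 * \sum_(i < m) (x i t) ^+ l.

(* The drift of x_j^l contains the singular sums
   sum_{k<>j} x_j^l (x_j(1-x_k) + x_k(1-x_j)) / (x_j - x_k).  Symmetrising over the
   pair (j,k) cancels the denominators, because
   (x_j^l - x_k^l) / (x_j - x_k) = sum_{i<l} x_j^(l-1-i) x_k^i, and the resulting
   double sum factors into products of power sums. *)
From HB Require Import structures.
From mathcomp Require Import all_boot all_order all_algebra.
From mathcomp Require Import all_classical all_reals all_analysis.
From mathcomp Require Import ring zify.
Import Order.TTheory GRing.Theory Num.Theory.
Local Open Scope ring_scope.

Definition power_sum {R : pzRingType} {m : nat} (y : 'I_m -> R) (a : nat) : R :=
  \sum_(i < m) y i ^+ a.

Definition jacobi_kernel {R : fieldType} (a b : R) : R :=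
  (a * (1 - b) + b * (1 - a)) / (a - b).

Definition geom_sum {R : pzRingType} (n : nat) (a b : R) : R :=
  \sum_(i < n) a ^+ (n.-1 - i) * b ^+ i.

Lemma subn_ord_pred {n i : nat} : (i < n)%N -> (n - i)%N = (n.-1 - i).+1.
Proof. lia. Qed.

Lemma sum_conv_shift (R : zmodType) (f : nat -> nat -> R) (n : nat) :
  (forall i j, f i j = f j i) ->
  \sum_(i < n) f (n.-1 - i)%N i.+1 = \sum_(i < n) f (n - i)%N i.
Proof.
move=> fC.
have conv_r : \sum_(i < n.+1) f i (n - i)%N = f 0%N n + \sum_(i < n) f i.+1 (n - i.+1)%N.
  by rewrite big_ord_recl subn0.
have conv_l : \sum_(i < n.+1) f i (n - i)%N = \sum_(i < n) f i (n - i)%N + f n 0%N.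
  by rewrite big_ord_recr subnn.
have -> : \sum_(i < n) f (n.-1 - i)%N i.+1 = \sum_(i < n) f i.+1 (n - i.+1)%N.
  by apply: eq_bigr => -[i /= lt_in] _; rewrite fC; congr f; lia.
under [RHS]eq_bigr => i _ do rewrite fC.
by apply: (@addrI _ (f 0%N n)); rewrite -conv_r conv_l addrC fC.
Qed.

Section PowerSumIdentities.
Variables (R : numFieldType) (m : nat) (y : 'I_m -> R).

Local Notation s := (power_sum y).

Lemma power_sum_mul (a b : nat) :
  \sum_(j < m) \sum_(k < m) y j ^+ a * y k ^+ b = s a * s b.
Proof. by rewrite /power_sum big_distrl; apply: eq_bigr => j _; rewrite big_distrr. Qed.

Lemma geom_sum_diag (n : nat) (a : R) : geom_sum n a a = n%:R * a ^+ n.-1.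
Proof.
rewrite /geom_sum (eq_bigr (fun _ => a ^+ n.-1)) ?sumr_const ?card_ord ?mulr_natl //.
by move=> -[i lt_in] _; rewrite -exprD subnK // -ltnS prednK // (leq_ltn_trans _ lt_in).
Qed.

Lemma jacobi_kernel_sym (n : nat) (a b : R) : a != b ->
  a ^+ n * jacobi_kernel a b + b ^+ n * jacobi_kernel b a =
  geom_sum n a b * (a * (1 - b) + b * (1 - a)).
Proof.
move=> neq_ab.
have nz_ab : a - b != 0 by rewrite subr_eq0.
have nz_ba : b - a != 0 by rewrite subr_eq0 eq_sym.
have -> : a ^+ n = b ^+ n + (a - b) * geom_sum n a b.
  by rewrite /geom_sum -subrXX; ring.
by rewrite /jacobi_kernel; field; rewrite nz_ab nz_ba.
Qed.

(* On the diagonal the kernel is the junk value [x / 0 = 0]. *)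
Lemma jacobi_kernel_pair (n : nat) (j k : 'I_m) : (forall i l, i != l -> y i != y l) ->
  y j ^+ n * jacobi_kernel (y j) (y k) + y k ^+ n * jacobi_kernel (y k) (y j) =
  geom_sum n (y j) (y k) * (y j * (1 - y k) + y k * (1 - y j))
  - (j == k)%:R * (2 * n%:R * (y j ^+ n - y j ^+ n.+1)).
Proof.
move=> y_inj; have [<-|neq_jk] := eqVneq j k; last first.
  by rewrite mul0r subr0 jacobi_kernel_sym ?y_inj.
rewrite /jacobi_kernel subrr invr0 !mulr0 addr0 mul1r geom_sum_diag.
by case: n => [|n] /=; rewrite ?exprS; ring.
Qed.

Lemma geom_sum_kernel_double_sum (n : nat) :
  \sum_(j < m) \sum_(k < m)
     geom_sum n (y j) (y k) * (y j * (1 - y k) + y k * (1 - y j)) =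
  \sum_(i < n) (s (n - i) * s i + s (n.-1 - i) * s i.+1 - 2 * (s (n - i) * s i.+1)).
Proof.
have expand j k : geom_sum n (y j) (y k) * (y j * (1 - y k) + y k * (1 - y j)) =
    \sum_(i < n) (y j ^+ (n - i) * y k ^+ i + y j ^+ (n.-1 - i) * y k ^+ i.+1
                  - 2 * (y j ^+ (n - i) * y k ^+ i.+1)).
  rewrite /geom_sum big_distrl /=; apply: eq_bigr => -[i lt_in] _ /=.
  by rewrite (subn_ord_pred lt_in) !exprS; ring.
under eq_bigr => j _ do under eq_bigr => k _ do rewrite expand.
under eq_bigr => j _ do rewrite exchange_big /=.
rewrite exchange_big /=; apply: eq_bigr => i _.
rewrite -!power_sum_mul big_distrr /= -!big_split /= -sumrB.
by apply: eq_bigr => j _; rewrite -big_split /= big_distrr -sumrB.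
Qed.

Lemma power_sum_kernel (n : nat) : (forall i l, i != l -> y i != y l) ->
  \sum_(j < m) y j ^+ n * \sum_(k < m | k != j) jacobi_kernel (y j) (y k)
  = \sum_(i < n) (s i - s i.+1) * s (n - i) - n%:R * (s n - s n.+1).
Proof.
move=> y_inj.
set B := LHS; set K := fun j k : 'I_m => y j ^+ n * jacobi_kernel (y j) (y k).
have B_full : B = \sum_(j < m) \sum_(k < m) K j k.
  rewrite /B; apply: eq_bigr => j _; rewrite big_distrr [RHS](bigD1 j) //=.
  by rewrite /K /jacobi_kernel subrr invr0 !mulr0 add0r.
have B_sym : 2 * B = \sum_(j < m) \sum_(k < m) (K j k + K k j).
  rewrite mulr2n mulrDl mul1r {1}B_full B_full [in X in _ + X]exchange_big.
  by rewrite -big_split; apply: eq_bigr => j _; rewrite -big_split.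
have pair_sum : \sum_(j < m) \sum_(k < m) (K j k + K k j) =
    \sum_(j < m) \sum_(k < m) geom_sum n (y j) (y k) * (y j * (1 - y k) + y k * (1 - y j))
    - 2 * n%:R * (s n - s n.+1).
  under eq_bigr => j _ do under eq_bigr => k _ do rewrite /K jacobi_kernel_pair //.
  rewrite /power_sum -sumrB big_distrr /= -sumrB; apply: eq_bigr => j _.
  rewrite sumrB; congr (_ - _).
  rewrite (bigD1 j) //= eqxx mul1r big1 ?addr0 // => k /negbTE.
  by rewrite eq_sym => ->; rewrite mul0r.
apply: (@mulfI _ 2); first by rewrite pnatr_eq0.
rewrite B_sym pair_sum geom_sum_kernel_double_sum sumrB big_split /=.
rewrite (sum_conv_shift _ (fun a b => s a * s b)) => [|a b]; last exact: mulrC.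
have -> : \sum_(i < n) (s i - s i.+1) * s (n - i) =
    \sum_(i < n) s (n - i) * s i - \sum_(i < n) s (n - i) * s i.+1.
  by rewrite -sumrB; apply: eq_bigr => i _; ring.
rewrite -mulr_sumr; ring.
Qed.

End PowerSumIdentities.

Lemma is_derive_root_moment (R : realType) (m : nat) (x : 'I_m -> R -> R)
    (l : nat) (t : R) (dx : 'I_m -> R) :
  (forall j, is_derive t 1 (x j) (dx j)) ->
  is_derive t 1 (root_moment x l) (m%:R^-1 * \sum_(j < m) (l%:R * x j t ^+ l.-1) * dx j).
Proof.
move=> x_der.
have -> : root_moment x l = m%:R^-1 \*: \sum_(i < m) x i ^+ l.
  apply: funext => u; rewrite /root_moment [in RHS]fct_sumE /=.
  by congr (_ * _); apply: eq_bigr => i _; rewrite exprfctE.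
by apply: is_derive_eq; congr (_ * _); apply: eq_bigr.
Qed.

Lemma moment_drift (R : realType) (m : nat) (p q : R) (y : 'I_m -> R) (n : nat) :
  m%:R != 0 :> R -> (forall i j, i != j -> y i != y j) ->
  let M a := m%:R^-1 * power_sum y a in
  m%:R^-1 * \sum_(j < m) (n.+1%:R * y j ^+ n) * jacobi_root_drift p q y j =
  - n.+1%:R * (p + q - n.+1%:R + 1) * M n.+1
  + n.+1%:R * (p - n.+1%:R + 1) * M n
  + m%:R * n.+1%:R * \sum_(0 <= k < n) (M k - M k.+1) * M (n - k)%N.
Proof.
move=> m_neq0 y_inj M.
have split_drift j : n.+1%:R * y j ^+ n * jacobi_root_drift p q y j =
    n.+1%:R * p * y j ^+ n - n.+1%:R * (p + q) * y j ^+ n.+1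
    + n.+1%:R * (y j ^+ n * \sum_(k < m | k != j) jacobi_kernel (y j) (y k)).
  by rewrite /jacobi_root_drift exprS; ring.
under eq_bigr => j _ do rewrite split_drift.
rewrite !big_split /= sumrN -!mulr_sumr power_sum_kernel //.
have -> : \sum_(0 <= k < n) (M k - M k.+1) * M (n - k)%N =
    m%:R^-1 * m%:R^-1 * \sum_(k < n) (power_sum y k - power_sum y k.+1) * power_sum y (n - k).
  by rewrite big_mkord mulr_sumr; apply: eq_bigr => k _; rewrite /M; ring.
by rewrite /M /power_sum; field.
Qed.

Theorem mainTheorem8 (R : realType) (m : nat) (p q : R)
  (x : 'I_m -> R -> R) :
  (1 <= m)%N ->
  (m%:R - 1 < p) -> (m%:R - 1 < q) ->
  (forall t : R, 0 < t -> forall i, 0 < x i t < 1) ->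
  (forall t : R, 0 < t -> forall i j : 'I_m, i != j -> x i t != x j t) ->
  (forall t : R, 0 < t -> forall j,
      is_derive t 1 (x j) (jacobi_root_drift p q (fun i => x i t) j)) ->
  forall t : R, 0 < t ->
    is_derive t 1 (root_moment x 1) (p - (p + q) * root_moment x 1 t) /\
    (forall l : nat, (2 <= l)%N ->
      is_derive t 1 (root_moment x l)
        (- l%:R * (p + q - l%:R + 1) * root_moment x l t
         + l%:R * (p - l%:R + 1) * root_moment x l.-1 t
         + m%:R * l%:R *
           \sum_(0 <= k < l.-1)
              (root_moment x k t - root_moment x k.+1 t)
                * root_moment x (l.-1 - k) t)).
Proof.
move=> m_gt0 _ _ _ x_inj x_der t t_gt0.
have m_neq0 : m%:R != 0 :> R by rewrite pnatr_eq0 -lt0n.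
have moment_der n : is_derive t 1 (root_moment x n.+1)
  (- n.+1%:R * (p + q - n.+1%:R + 1) * root_moment x n.+1 t
   + n.+1%:R * (p - n.+1%:R + 1) * root_moment x n t
   + m%:R * n.+1%:R * \sum_(0 <= k < n)
        (root_moment x k t - root_moment x k.+1 t) * root_moment x (n - k) t).
  apply: is_derive_eq; first exact: is_derive_root_moment (x_der t t_gt0).
  exact: moment_drift m_neq0 (x_inj t t_gt0).
split; last by case=> [|[|n]] // _; exact: moment_der n.+1.
apply: (is_derive_eq (moment_der 0%N)).
have -> : root_moment x 0 t = 1.
  by rewrite /root_moment (eq_bigr (fun _ => 1)) ?sumr_const ?card_ord ?mulVf.
by rewrite big_geq //; ring.
Qed.
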